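(* Let $u=a_1\cdots a_n$ be a word over a finite alphabet $A$ and let $i$ be a $c$-position of $u$. Let $P_i$ be the set of all predecessors of $i$, i.e. the set of positions $j$ such that there exists an X-ranker $r\mathsf X_c$ of minimal length among X-rankers reaching $i$ with $r\mathsf X_c(u)=i$ and $r(u)=j$. Then the positions in $P_i$ all have pairwise different labels.
   Context: An X-ranker is a nonempty word over $\{\mathsf X_a : a\in A\}$, length = word length. For a word $w$, $\mathsf X_a(w)$ is the smallest $a$-position of $w$ and $r\mathsf X_a(w)$ the smallest $a$-position greater than $r(w)$ (possibly undefined). The label of position $j$ of $u$ is $a_j$. *)

From mathcomp Require Import all_boot.
Set Implicit Arguments. Unset Strict Implicit. Unset Printing Implicit Defensive.

(* Words u = a_1 ... a_n : seq A; positions are 1..n, position j has label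
   a_j = nth _ u j.-1.  An X-ranker X_{b_1} ... X_{b_k} is represented by the
   nonempty sequence [:: b_1; ...; b_k] of letters. *)

Definition label (A : eqType) (u : seq A) (j : nat) : option A :=
  if 0 < j then onth u j.-1 else None.

(* smallest a-position of u strictly greater than p (p = 0 : "start") *)
Definition next_pos (A : eqType) (u : seq A) (a : A) (p : nat) : option nat :=
  let s := drop p u in
  let k := find (pred1 a) s in
  if k < size s then Some (p + k).+1 else None.

(* r(u): X_a(w) is the smallest a-position, r X_a(w) the smallest a-position
   greater than r(w); undefined = None *)
Definition xeval (A : eqType) (u : seq A) (r : seq A) : option nat :=
  foldl (fun o a => obind (next_pos u a) o) (Some 0) r.

Definition reaches (A : eqType) (u : seq A) (r : seq A) (i : nat) : Prop :=
  r != [::] /\ xeval u r = Some i.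

Definition min_reaching (A : eqType) (u : seq A) (r : seq A) (i : nat) : Prop :=
  reaches u r i /\ forall r', reaches u r' i -> size r <= size r'.

Definition predecessor (A : eqType) (u : seq A) (c : A) (i j : nat) : Prop :=
  exists r : seq A, [/\ r != [::], min_reaching u (rcons r c) i
                      & xeval u r = Some j].

(* Let r X_b X_c and r' X_b X_c be shortest X-rankers reaching the c-position i,
   with r X_b(u) = j < j' = r' X_b(u), both j and j' being b-positions.  Since j'
   is the first b-position after r'(u), we get j <= r'(u); and since i is the
   first c-position after j, it is also the first one after r'(u).  Hence the
   shorter ranker r' X_c already reaches i, contradicting minimality. *)
From mathcomp Require Import all_boot zify.

Section NextPosition.
Context {A : eqType}.
Implicit Types (u r : seq A) (a : A).

Lemma label_drop u p k : label u (p + k).+1 = onth (drop p u) k.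
Proof. by rewrite /label /= !onthE map_drop nth_drop. Qed.

Lemma next_posP u a p q :
  next_pos u a p = Some q <->
  [/\ p < q, label u q = Some a & forall k, p < k < q -> label u k != Some a].
Proof.
rewrite /next_pos; set s := drop p u; set f := find (pred1 a) s.
have label_at k : k < size s -> label u (p + k).+1 = Some (nth a s k).
  by move=> lt_k; rewrite label_drop onthE (nth_map a).
have label_before k : k < f -> label u (p + k).+1 != Some a.
  move=> lt_kf; rewrite label_at; last by rewrite (leq_trans lt_kf) ?find_size.
  by apply/eqP => -[e]; have := before_find a lt_kf; rewrite /= e eqxx.
have nth_f : has (pred1 a) s -> nth a s f = a.
  by move=> has_a; exact/eqP/(nth_find a has_a).
have label_shift k : p < k -> k = (p + (k.-1 - p)).+1 by case: k => //= k; lia.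
split.
- case: ifP => // lt_f [<-]; split; first lia.
    by rewrite label_at // nth_f // has_find.
  move=> k /andP[lt_pk lt_kq]; rewrite (label_shift k lt_pk) label_before //; lia.
- move=> [lt_pq lab_q no_a]; move: lab_q; rewrite (label_shift q lt_pq).
  set k := q.-1 - p; rewrite label_drop => s_k.
  have lt_k : k < size s by rewrite -onthTE s_k.
  have ->: f = k.
    case: (ltngtP f k) => // [lt_fk | lt_kf].
    + have lt_pfq : p < (p + f).+1 < q by lia.
      have := no_a _ lt_pfq.
      by rewrite label_at ?(ltn_trans lt_fk) // nth_f ?has_find ?(ltn_trans lt_fk) // eqxx.
    + by have := label_before k lt_kf; rewrite label_drop s_k eqxx.
  by rewrite lt_k.
Qed.

Lemma next_pos_shortcut u b c p j1 j2 i :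
  j1 < j2 -> label u j1 = Some b ->
  next_pos u b p = Some j2 -> next_pos u c j1 = Some i ->
  next_pos u c j2 = Some i -> next_pos u c p = Some i.
Proof.
move=> lt_j lab_j1 /next_posP[lt_p2 _ no_b] /next_posP[_ lab_i no_c]
  /next_posP[lt_j2i _ _].
have le_j1p : j1 <= p.
  rewrite leqNgt; apply/negP => lt_pj1.
  by have := no_b j1; rewrite lt_pj1 lt_j lab_j1 eqxx => /(_ isT).
apply/next_posP; split=> [||k /andP[lt_pk lt_ki]]; [lia | done |].
by apply: no_c; apply/andP; split; lia.
Qed.

Lemma xeval_rcons u r a : xeval u (rcons r a) = obind (next_pos u a) (xeval u r).
Proof. by rewrite /xeval foldl_rcons. Qed.

Lemma predecessor_rcons u c i j : predecessor u c i j ->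
  exists r b p, [/\ min_reaching u (rcons (rcons r b) c) i, xeval u r = Some p,
                    next_pos u b p = Some j & next_pos u c j = Some i].
Proof.
case=> r [r_nil min_r x_r]; case/lastP: r r_nil min_r x_r => // r b _ min_r.
rewrite xeval_rcons; case x_r: (xeval u r) => [p|] //= next_b.
exists r, b, p; split => //.
by case: min_r => -[_]; rewrite !xeval_rcons x_r /= next_b.
Qed.

Lemma predecessor_lt_label {u c i j1 j2} :
  predecessor u c i j1 -> predecessor u c i j2 -> j1 < j2 ->
  label u j1 != label u j2.
Proof.
move=> /predecessor_rcons[_ [b1 [p1 [_ _ next_b1 next_c1]]]].
move=> /predecessor_rcons[r [b [p [[_ min_r] x_r next_b next_c]]]] lt_j.
have /next_posP[_ lab_j1 _] := next_b1.
have /next_posP[_ lab_j2 _] := next_b.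
rewrite lab_j1 lab_j2; apply/eqP => -[eq_b]; subst b1.
have next_cp : next_pos u c p = Some i.
  exact: next_pos_shortcut lt_j lab_j1 next_b next_c1 next_c.
have reach_short : reaches u (rcons r c) i.
  by split; [case: (r) | rewrite xeval_rcons x_r].
by have := min_r _ reach_short; rewrite !size_rcons ltnn.
Qed.

End NextPosition.

Theorem lemma22 (A : finType) (u : seq A) (c : A) (i : nat) :
  label u i = Some c ->
  forall j1 j2 : nat,
    predecessor u c i j1 -> predecessor u c i j2 ->
    label u j1 = label u j2 -> j1 = j2.
Proof.
(* The hypothesis on [label u i] is implied by [predecessor u c i _]. *)
move=> _ j1 j2 pred_j1 pred_j2 eq_label.
wlog lt_j : j1 j2 pred_j1 pred_j2 eq_label / j1 < j2.
  move=> wlog_lt; case: (ltngtP j1 j2) => // lt_j; first exact: wlog_lt.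
  exact/esym/wlog_lt.
by move: (predecessor_lt_label pred_j1 pred_j2 lt_j); rewrite eq_label eqxx.
Qed.
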